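(* Assume the following statement holds: for every base $b>2$, every integer $n$ with $1<n<b$, and every symmetric $(n,b)$-palintiple with carries $c_k,\ldots,c_0$, one has $c_j\equiv 0 \pmod{n-1}$ for all $0\le j\le k$. Then, for integers $b>2$ and $1<n<b$, an $(n,b)$-palintiple is symmetric if and only if $n+1$ divides $b$.
   Context: Let $b>2$ be an integer base and write $(d_k,d_{k-1},\ldots,d_0)_b=\sum_{j=0}^k d_j b^j$ with $0\le d_j<b$. A natural number $p=(d_k,\ldots,d_0)_b$ with $d_k\neq 0$ and $d_0\neq 0$ that is not a base-$b$ palindrome is an $(n,b)$-palintiple if $(d_k,\ldots,d_0)_b=n\,(d_0,d_1,\ldots,d_k)_b$ for an integer $n$ with $1<n<b$. Its carries $c_0,\ldots,c_{k+1}$ are the carries arising in the base-$b$ multiplication of $(d_0,\ldots,d_k)_b$ by $n$: $c_0=0$ and $n d_{k-j}+c_j=d_j+b\,c_{j+1}$ for $0\le j\le k$ (so $c_{k+1}=0$). The palintiple is symmetric if $c_j=c_{k-j}$ for all $0\le j\le k$, shifted-symmetric if $c_j=c_{k-j+1}$ for all $0\le j\le k$, and asymmetric if it is neither. *)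

From mathcomp Require Import all_boot.
Set Implicit Arguments. Unset Strict Implicit. Unset Printing Implicit Defensive.

(* A number with base-b digits d_k ... d_0 is represented by k and d : nat -> nat
   (only d 0, ..., d k matter).  Value (d_k,...,d_0)_b = sum_{j<=k} d_j b^j. *)
Definition digval (b k : nat) (d : nat -> nat) : nat :=
  \sum_(j < k.+1) d j * b ^ j.

Definition revval (b k : nat) (d : nat -> nat) : nat :=
  \sum_(j < k.+1) d (k - j) * b ^ j.

(* Carries of the base-b multiplication of (d_0,...,d_k)_b by n:
   c_0 = 0 and n d_{k-j} + c_j = (digit) + b c_{j+1}, i.e.
   c_{j+1} = (n d_{k-j} + c_j) div b. *)
Fixpoint carry (n b k : nat) (d : nat -> nat) (j : nat) : nat :=
  match j with
  | 0 => 0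
  | j'.+1 => (n * d (k - j') + carry n b k d j') %/ b
  end.

Definition palintiple (n b k : nat) (d : nat -> nat) : Prop :=
  [/\ 1 < n < b,
      (forall j, j <= k -> d j < b),
      d k <> 0 /\ d 0 <> 0,
      (exists j, j <= k /\ d j <> d (k - j))
    & digval b k d = n * revval b k d].

Definition symmetric_pal (n b k : nat) (d : nat -> nat) : Prop :=
  forall j, j <= k -> carry n b k d j = carry n b k d (k - j).

(* Multiplying the reversal by n digit by digit shows that the carries satisfy
   n d_(k-j) + c_j = b c_(j+1) + d_j, with c_(k+1) = 0 by uniqueness of base-b
   digits.  If b = m (n+1), reducing this modulo n+1 (where n is -1) gives
   c_j = d_j + d_(k-j) mod n+1, which is symmetric in j <-> k-j since c_j < n.
   Conversely, for a symmetric palintiple c_k = c_0 = 0 forces d_k = n d_0, so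
   column 0 reads (n^2 - 1) d_0 = c_1 b; the assumed congruence c_1 = 0 mod n-1
   together with 0 < c_1 < n gives c_1 = n - 1, whence b = (n+1) d_0. *)
From mathcomp Require Import all_boot.
From mathcomp Require Import zify.

Lemma base_digits_inj {b m} {x y : nat -> nat} : 0 < b ->
  (forall j, j < m -> x j < b) -> (forall j, j < m -> y j < b) ->
  \sum_(j < m) x j * b ^ j = \sum_(j < m) y j * b ^ j ->
  forall j, j < m -> x j = y j.
Proof.
move=> b_gt0; elim: m x y => [|m IH] x y x_ltb y_ltb + j //.
rewrite !big_ord_recl /= !muln1.
have shift (z : nat -> nat) : \sum_(i < m) z (bump 0 i) * b ^ bump 0 i
    = b * \sum_(i < m) z i.+1 * b ^ i.
  by rewrite big_distrr; apply: eq_bigr => i _; rewrite expnS mulnCA.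
rewrite !shift => E.
have x0_y0 : x 0 = y 0.
  have := congr1 (modn^~ b) E; rewrite ![_ + b * _]addnC ![b * _]mulnC !modnMDl.
  by rewrite !modn_small ?x_ltb ?y_ltb.
case: j => [|j] // j_lt; apply: (IH (x \o succn) (y \o succn)) => //.
- by move=> i i_lt; apply: x_ltb.
- by move=> i i_lt; apply: y_ltb.
- by move: E; rewrite x0_y0 => /addnI /eqP; rewrite eqn_pmul2l // => /eqP.
Qed.

Section PalintipleCarries.

Context {n b k : nat} {d : nat -> nat}.
Hypotheses (n_gt0 : 0 < n) (n_ltb : n < b) (d_ltb : forall i, i <= k -> d i < b).

Local Notation c := (carry n b k d).

Let b_gt0 : 0 < b. Proof. exact: ltn_trans n_ltb. Qed.

Lemma carry_ltn j : c j < n.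
Proof.
elim: j => [|j IH] //=; rewrite ltn_divLR //.
by have := @d_ltb _ (leq_subr j k); nia.
Qed.

Lemma mul_revval_prefix m :
  n * \sum_(j < m) d (k - j) * b ^ j =
  \sum_(j < m) ((n * d (k - j) + c j) %% b) * b ^ j + c m * b ^ m.
Proof.
elim: m => [|m IH]; first by rewrite !big_ord0 muln0.
rewrite !big_ord_recr /= mulnDr IH -!addnA expnS; congr (_ + _).
by have := divn_eq (n * d (k - m) + c m) b; nia.
Qed.

Hypothesis pal_eq : digval b k d = n * revval b k d.

Lemma palintiple_columns :
  (forall j, j <= k -> n * d (k - j) + c j = c j.+1 * b + d j) /\ c k.+1 = 0.
Proof.
pose x j := if j < k.+1 then d j else 0.
pose y j := if j < k.+1 then (n * d (k - j) + c j) %% b else c k.+1.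
have x_ltb j : j < k.+2 -> x j < b by rewrite /x ltnS; case: ifP => // /d_ltb.
have y_ltb j : j < k.+2 -> y j < b.
  by rewrite /y; case: ifP => _ _; [rewrite ltn_mod | exact: ltn_trans (carry_ltn _) _].
have x_eq_y : forall j, j < k.+2 -> x j = y j.
  apply: (base_digits_inj b_gt0 x_ltb y_ltb).
  rewrite big_ord_recr [RHS]big_ord_recr /= /x /y !ltnn mul0n addn0.
  under eq_bigr => i _ do rewrite ltn_ord.
  under [in RHS]eq_bigr => i _ do rewrite ltn_ord.
  by rewrite -mul_revval_prefix.
split => [j j_le | ]; last by have := x_eq_y k.+1 (ltnSn _); rewrite /x /y ltnn.
have := x_eq_y j (leqW j_le); rewrite /x /y ltnS j_le => ->.
exact: divn_eq.
Qed.

Lemma carry_eq_mod_digit_sum m j : b = m * n.+1 -> j <= k ->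
  c j = (d j + d (k - j)) %% n.+1.
Proof.
move=> b_eq j_le; have [col _] := palintiple_columns.
have col_modS : d (k - j) * n.+1 + c j = c j.+1 * m * n.+1 + (d j + d (k - j)).
  by have := col j j_le; rewrite b_eq; nia.
by rewrite -(modn_small (leqW (carry_ltn j))) -(modnMDl (d (k - j))) col_modS modnMDl.
Qed.

Lemma symmetric_pal_of_dvd : n.+1 %| b -> symmetric_pal n b k d.
Proof.
move=> /dvdnP[m b_eq] j j_le.
by rewrite !(carry_eq_mod_digit_sum _ _ b_eq) ?leq_subr // subKn // addnC.
Qed.

Lemma symmetric_pal_first_carry : symmetric_pal n b k d ->
  n.-1 * n.+1 * d 0 = c 1 * b.
Proof.
move=> sym; have [col last_carry] := palintiple_columns.
have ck0 : c k = 0 by rewrite sym // subnn.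
have dk : d k = n * d 0.
  by have := col k (leqnn k); rewrite subnn ck0 last_carry addn0 mul0n add0n.
have := col 0 (leq0n k); rewrite subn0 dk addn0.
by case: n n_gt0 => // p _ /=; nia.
Qed.

End PalintipleCarries.

Lemma dvdn_of_first_carry {n b d0 c1} : 1 < n -> 0 < d0 -> c1 < n ->
  c1 = 0 %[mod n.-1] -> n.-1 * n.+1 * d0 = c1 * b -> n.+1 %| b.
Proof.
case: n => // p p_gt0 d0_gt0 c1_lt /= c1_mod col0.
have /dvdnP[q c1_eq] : p %| c1 by rewrite /dvdn c1_mod mod0n.
have q1 : q = 1 by nia.
apply/dvdnP; exists d0; nia.
Qed.

Theorem corollary1 :
  (forall (b n k : nat) (d : nat -> nat),
      2 < b -> 1 < n < b -> palintiple n b k d -> symmetric_pal n b k d ->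
      forall j, j <= k -> carry n b k d j = 0 %[mod n.-1]) ->
  forall (b n k : nat) (d : nat -> nat),
    2 < b -> 1 < n < b -> palintiple n b k d ->
    (symmetric_pal n b k d <-> n.+1 %| b).
Proof.
move=> carry_mod b n k d b_gt2 n_bounds pal.
have [/andP[n_gt1 n_ltb] d_ltb [_ d0_neq0] [j0 [j0_le j0_neq]] pal_eq] := pal.
have n_gt0 : 0 < n by exact: ltnW.
split; last exact: symmetric_pal_of_dvd n_gt0 n_ltb d_ltb pal_eq.
move=> sym.
have k_gt0 : 0 < k.
  by rewrite lt0n; apply/eqP => k0; move: j0_le j0_neq; rewrite k0 leqn0 => /eqP ->.
have col0 := symmetric_pal_first_carry n_gt0 n_ltb d_ltb pal_eq sym.
apply: (dvdn_of_first_carry n_gt1 _ (carry_ltn n_gt0 n_ltb d_ltb 1) _ col0).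
- by rewrite lt0n; apply/eqP.
- exact: carry_mod _ _ _ _ b_gt2 n_bounds pal sym 1 k_gt0.
Qed.
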